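(* Let $S_N$ be the star graph on $N\ge 2$ vertices with center $c$ and leaves $\ell_1,\dots,\ell_{N-1}$, and let $\delta\in[0,1]$. Then for each $i\in\{1,\dots,N-1\}$, $$\mathsf{fp}_{r=1}^{\delta}(S_N,\{\ell_i\})=\frac{1+(1-\delta)(N-2)}{(1-\delta)(N-2)^2+2(N-1)}\quad\text{and}\quad\mathsf{fp}_{r=1}^{\delta}(S_N,\{c\})=\frac{1+\delta(N-2)}{(1-\delta)(N-2)^2+2(N-1)}.$$
   Context: Mixed $\delta$-updating on an undirected unweighted graph $G=(V,E)$: each vertex holds a mutant (fitness $r$) or wild-type (fitness $1$); $f_S(u)$ is the fitness at $u$ when $S$ is the mutant set. At each step, with probability $\delta$ a death-Birth step: choose $v$ uniformly to die, choose a neighbor $u$ of $v$ with probability proportional to $f_S(u)$, $u$ copies its type onto $v$; with probability $1-\delta$ a Birth-death step: choose $u$ with probability proportional to $f_S(u)$ among all vertices, choose a uniformly random neighbor $v$ of $u$, $u$ copies its type onto $v$. $\mathsf{fp}_r^\delta(G,S_0)$ is the probability that all vertices eventually become mutant from initial mutant set $S_0$. *)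

From HB Require Import structures.
From mathcomp Require Import all_boot all_order all_algebra.
From mathcomp Require Import boolp classical_sets reals topology normedtype sequences.
Set Implicit Arguments. Unset Strict Implicit. Unset Printing Implicit Defensive.
Import Order.TTheory GRing.Theory Num.Theory numFieldNormedType.Exports.
Local Open Scope classical_set_scope.
Local Open Scope ring_scope.

Section MixedUpdating.
Variable R : realType.
Variables (V : finType) (e : rel V).   (* e : symmetric irreflexive adjacency *)

Definition fit (r : R) (S : {set V}) (u : V) : R := if u \in S then r else 1.

(* vertex v takes type b (true = mutant) *)
Definition upd (S : {set V}) (v : V) (b : bool) : {set V} :=
  if b then v |: S else S :\ v.

(* death-Birth step: v uniform dies, neighbour u chosen prop. to fitness,
   u copies its type onto v *)
Definition dB_trans (r : R) (S S' : {set V}) : R :=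
  \sum_(v : V) (#|V|%:R)^-1 *
    \sum_(u : V | e v u)
      (fit r S u / \sum_(w : V | e v w) fit r S w) * (S' == upd S v (u \in S))%:R.

(* Birth-death step: u chosen prop. to fitness among all vertices,
   v uniform neighbour of u, u copies its type onto v *)
Definition Bd_trans (r : R) (S S' : {set V}) : R :=
  \sum_(u : V) (fit r S u / \sum_(w : V) fit r S w) *
    \sum_(v : V | e u v)
      (#|[set w | e u w]|%:R)^-1 * (S' == upd S v (u \in S))%:R.

Definition trans (delta r : R) (S S' : {set V}) : R :=
  delta * dB_trans r S S' + (1 - delta) * Bd_trans r S S'.

Fixpoint tprob (delta r : R) (t : nat) (S0 S : {set V}) : R :=
  match t with
  | 0 => (S0 == S)%:R
  | t'.+1 => \sum_(S1 : {set V}) tprob delta r t' S0 S1 * trans delta r S1 S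
  end.

(* Since [set: V] is absorbing, the event "all vertices eventually mutant" is the
   increasing union of the events "mutant set = [set: V] at time t";
   fp_r^delta(G,S0) = p means these probabilities converge to p. *)
Definition fp_is (delta r : R) (S0 : {set V}) (p : R) : Prop :=
  (fun t : nat => tprob delta r t S0 [set: V]) @ \oo --> p.

End MixedUpdating.

Definition star (N : nat) (c : 'I_N) : rel 'I_N :=
  fun u v => (u != v) && ((u == c) || (v == c)).

From HB Require Import structures.
From mathcomp Require Import all_boot all_order all_algebra.
From mathcomp Require Import boolp classical_sets reals topology normedtype sequences.
From mathcomp Require Import ring.
Import Order.TTheory GRing.Theory Num.Theory numFieldNormedType.Exports.

(* At neutral fitness every step copies a type along a single edge {c, l} of the star: l
   overwrites the centre with probability [leaf_to_centre], or the centre overwrites l with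
   probability [centre_to_leaf]. Giving the centre the weight 1 + delta (N - 2) and each leaf
   the weight 1 + (1 - delta) (N - 2), the expected changes of the mutant weight caused by the
   two moves cancel, so the normalised mutant weight h S is a martingale. Since h is 0 on the
   empty set and 1 on the full set, the fixation probability is h S0 as soon as absorption is
   certain, and it is: E[h^2] stays below 1 but grows by a fixed amount at every step spent in
   a transient state, so the expected number of such steps is finite. *)

Set Implicit Arguments.
Unset Strict Implicit.
Unset Printing Implicit Defensive.

Local Open Scope ring_scope.

Section HarmonicAbsorption.
Local Open Scope classical_set_scope.
Variables (R : realType) (T : finType) (P : T -> T -> R).
Variables (x0 : T) (p : nat -> T -> R).
Variables (h : T -> R) (lo hi : T) (gamma : R).

Definition kernel_apply (f : T -> R) (x : T) : R := \sum_y P x y * f y.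

Hypothesis P_ge0 : forall x y, 0 <= P x y.
Hypothesis p0 : forall y, p 0 y = (x0 == y)%:R.
Hypothesis pS : forall t y, p t.+1 y = \sum_x p t x * P x y.

Definition expect (t : nat) (f : T -> R) : R := \sum_x p t x * f x.

Lemma p_ge0 t y : 0 <= p t y.
Proof.
elim: t y => [|t IH] y; first by rewrite p0 ler0n.
by rewrite pS sumr_ge0 // => x _; rewrite mulr_ge0.
Qed.

Lemma expect0 f : expect 0 f = f x0.
Proof.
rewrite /expect (bigD1 x0) //= p0 eqxx mul1r big1 ?addr0 // => x xx0.
by rewrite p0 eq_sym (negbTE xx0) mul0r.
Qed.

Lemma expectS t f : expect t.+1 f = expect t (kernel_apply f).
Proof.
rewrite /expect /kernel_apply.
under eq_bigr do rewrite pS big_distrl.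
rewrite exchange_big; apply: eq_bigr => x _ /=.
by rewrite mulr_sumr; apply: eq_bigr => y _; rewrite mulrA.
Qed.

Lemma ler_expect t f g : (forall x, f x <= g x) -> expect t f <= expect t g.
Proof. by move=> le_fg; apply: ler_sum => x _; rewrite ler_wpM2l ?p_ge0. Qed.

Hypothesis h_harmonic : forall x, kernel_apply h x = h x.
Hypothesis h_ge0 : forall x, 0 <= h x.
Hypothesis h_le1 : forall x, h x <= 1.
Hypothesis h_lo : h lo = 0.
Hypothesis h_hi : h hi = 1.
Hypothesis gamma_gt0 : 0 < gamma.

Definition transient (x : T) : R := ((x != lo) && (x != hi))%:R.

Hypothesis h2_drift : forall x,
  h x ^+ 2 + gamma * transient x <= kernel_apply (fun y => h y ^+ 2) x.

Lemma expect_h t : expect t h = h x0.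
Proof.
elim: t => [|t IH]; first exact: expect0.
by rewrite expectS -IH; apply: eq_bigr => x _; rewrite h_harmonic.
Qed.

Lemma expect_h2_ge t :
  h x0 ^+ 2 + gamma * \sum_(0 <= s < t) expect s transient
  <= expect t (fun x => h x ^+ 2).
Proof.
elim: t => [|t IH]; first by rewrite big_nil mulr0 addr0 expect0.
rewrite big_nat_recr //= mulrDr addrA; apply: le_trans (lerD IH (lexx _)) _.
rewrite expectS /expect mulr_sumr -big_split; apply: ler_sum => x _ /=.
by rewrite [gamma * _]mulrCA -mulrDr ler_wpM2l ?p_ge0.
Qed.

Lemma expect_transient_sum t :
  gamma * \sum_(0 <= s < t) expect s transient <= 1.
Proof.
have h2_le : expect t (fun x => h x ^+ 2) <= h x0.
  by rewrite -(expect_h t); apply: ler_expect => x; rewrite expr2 ler_piMl.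
apply: le_trans (h_le1 x0); apply: le_trans h2_le.
by apply: le_trans (expect_h2_ge t); rewrite lerDr sqr_ge0.
Qed.

Lemma absorption_gap t : 0 <= h x0 - p t hi <= expect t transient.
Proof.
have -> : h x0 - p t hi = \sum_(x | x != hi) p t x * h x.
  by rewrite -(expect_h t) /expect (bigD1 hi) //= h_hi mulr1 addrAC subrr add0r.
have -> : expect t transient = \sum_(x | x != hi) p t x * transient x.
  by rewrite /expect (bigD1 hi) //= /transient eqxx andbF mulr0 add0r.
rewrite sumr_ge0 => [|x _]; last by rewrite mulr_ge0 ?p_ge0.
apply: ler_sum => x x_hi; rewrite ler_wpM2l ?p_ge0 // /transient x_hi andbT.
by case: eqP => [->|_]; rewrite ?h_lo.
Qed.

Theorem harmonic_absorption : (fun t => p t hi) @ \oo --> h x0.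
Proof.
pose q t := expect t transient.
have q_ge0 t : 0 <= q t by case/andP: (absorption_gap t) => /le_trans; apply.
have q_cvg0 : q @ \oo --> 0.
  apply: cvg_series_cvg_0; apply: nondecreasing_is_cvgn.
    exact: nondecreasing_series (fun t _ _ => q_ge0 t).
  exists gamma^-1 => _ [t _ <-] /=.
  by rewrite -(ler_pM2l gamma_gt0) mulfV ?gt_eqF ?expect_transient_sum.
have gap_cvg0 : (fun t => h x0 - p t hi) @ \oo --> 0.
  apply: (squeeze_cvgr _ (cvg_cst 0) q_cvg0).
  by near=> t; exact: absorption_gap.
rewrite (_ : (fun t => p t hi) = fun t => h x0 - (h x0 - p t hi)).
  by rewrite -[X in _ --> X]subr0; apply: cvgB => //; exact: cvg_cst.
by apply: funext => t; rewrite subKr.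
Unshelve. all: by end_near.
Qed.

End HarmonicAbsorption.

Arguments transient {R T}.

Lemma sum_mixture_indicator (R : pzSemiRingType) (I T : finType) (P : pred I)
    (w : I -> R) (X : I -> T) (f : T -> R) :
  \sum_y (\sum_(i | P i) w i * (y == X i)%:R) * f y = \sum_(i | P i) w i * f (X i).
Proof.
under eq_bigr do rewrite mulr_suml.
rewrite exchange_big; apply: eq_bigr => i _ /=.
rewrite (bigD1 (X i)) //= eqxx mulr1 big1 ?addr0 // => y /negbTE ->.
by rewrite mulr0 mul0r.
Qed.

Section TransitionKernel.
Variables (R : realType) (V : finType) (e : rel V).

Lemma fit_ge0 (r : R) (S : {set V}) (u : V) : 0 <= r -> 0 <= fit r S u.
Proof. by rewrite /fit; case: ifP. Qed.

Lemma trans_ge0 (delta r : R) (S S' : {set V}) :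
  0 <= delta <= 1 -> 0 <= r -> 0 <= trans e delta r S S'.
Proof.
case/andP=> delta_ge0 delta_le1 r_ge0.
have fit_sum_ge0 (a : pred V) : 0 <= \sum_(w | a w) fit r S w.
  by rewrite sumr_ge0 // => w _; rewrite fit_ge0.
rewrite addr_ge0 // mulr_ge0 ?subr_ge0 //.
- apply: sumr_ge0 => v _; rewrite mulr_ge0 ?invr_ge0 ?ler0n //.
  by apply: sumr_ge0 => u _; rewrite mulr_ge0 ?ler0n ?divr_ge0 ?fit_ge0.
- apply: sumr_ge0 => u _; rewrite mulr_ge0 ?divr_ge0 ?fit_ge0 //.
  by apply: sumr_ge0 => v _; rewrite mulr_ge0 ?invr_ge0 ?ler0n.
Qed.

Lemma dB_transE (r : R) (S : {set V}) (f : {set V} -> R) :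
  \sum_S' dB_trans e r S S' * f S' =
  \sum_v #|V|%:R^-1 * \sum_(u | e v u)
    fit r S u / (\sum_(w | e v w) fit r S w) * f (upd S v (u \in S)).
Proof.
rewrite /dB_trans; under eq_bigr do rewrite mulr_suml.
rewrite exchange_big; apply: eq_bigr => v _ /=.
by under eq_bigr do rewrite -mulrA; rewrite -mulr_sumr sum_mixture_indicator.
Qed.

Lemma Bd_transE (r : R) (S : {set V}) (f : {set V} -> R) :
  \sum_S' Bd_trans e r S S' * f S' =
  \sum_u fit r S u / (\sum_w fit r S w) * \sum_(v | e u v)
    #|[set w | e u w]%classic|%:R^-1 * f (upd S v (u \in S)).
Proof.
rewrite /Bd_trans; under eq_bigr do rewrite mulr_suml.
rewrite exchange_big; apply: eq_bigr => u _ /=.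
by under eq_bigr do rewrite -mulrA; rewrite -mulr_sumr sum_mixture_indicator.
Qed.

Lemma sum_upd (g : V -> R) (S : {set V}) (v : V) (b : bool) :
  \sum_(x in upd S v b) g x = \sum_(x in S) g x + g v * (b%:R - (v \in S)%:R).
Proof.
rewrite big_mkcond [in RHS]big_mkcond (bigD1 v) //= [in RHS](bigD1 v) //=.
have -> : \sum_(x | x != v) (if x \in upd S v b then g x else 0) =
          \sum_(x | x != v) (if x \in S then g x else 0).
  by apply: eq_bigr => x xv; rewrite /upd; case: b; rewrite !inE (negbTE xv).
by rewrite /upd; case: b; rewrite !inE eqxx /=; case: (v \in S) => /=; ring.
Qed.

End TransitionKernel.

Section Star.
Variables (n : nat) (c : 'I_n.+2).

Lemma sum_star_nbr (M : nmodType) (v : 'I_n.+2) (g : 'I_n.+2 -> M) :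
  \sum_(w | star c v w) g w = if v == c then \sum_(w | w != c) g w else g c.
Proof.
case: eqP => [->|/eqP vc].
  by apply: eq_bigl => w; rewrite /star eqxx orTb andbT eq_sym.
rewrite (big_pred1 c) // => w; rewrite /star (negbTE vc) /=.
by case: (eqVneq w c) => [->|wc]; rewrite ?vc ?eqxx ?(negbTE wc) ?andbF.
Qed.

Lemma sum_star_edges (M : nmodType) (F : 'I_n.+2 -> 'I_n.+2 -> M) :
  \sum_v \sum_(u | star c v u) F v u = \sum_(l | l != c) (F c l + F l c).
Proof.
rewrite (bigD1 c) //= sum_star_nbr eqxx.
under eq_bigr => v vc do rewrite sum_star_nbr (negbTE vc).
by rewrite big_split.
Qed.

Lemma sum_leaves_const (M : nmodType) (k : M) : \sum_(l | l != c) k = k *+ n.+1.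
Proof. by rewrite sumr_const cardC1 card_ord. Qed.

Lemma card_star_nbr (v : 'I_n.+2) :
  #|[set w | star c v w]%classic| = if v == c then n.+1 else 1%N.
Proof.
have -> : #|[set w | star c v w]%classic| = \sum_(w | star c v w) 1%N.
  by rewrite sum1_card; apply: eq_card => w; apply/idP/idP; rewrite in_setE.
by rewrite sum_star_nbr; case: eqP => // _; rewrite sum1_card cardC1 card_ord.
Qed.

Lemma exists_discordant_leaf (S : {set 'I_n.+2}) (a b : 'I_n.+2) :
  a \in S -> b \notin S -> exists2 l, l != c & (l \in S) != (c \in S).
Proof.
move=> aS bS; case cS: (c \in S).
- by exists b; [apply: contraNneq bS => ->|rewrite (negbTE bS)].
- by exists a; [apply: contraTneq aS => ->; rewrite cS|rewrite aS].
Qed.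

End Star.

Lemma balanced_step_mean (K : comPzRingType) (a b u v h d : K) :
  a * u = b * v -> a * (h + u * d) + b * (h - v * d) = (a + b) * h.
Proof.
move=> auv; have -> : a * (h + u * d) + b * (h - v * d) = (a + b) * h + (a * u - b * v) * d.
  by ring.
by rewrite auv subrr mul0r addr0.
Qed.

Lemma balanced_step_sq (K : comPzRingType) (a b u v h d : K) :
  a * u = b * v ->
  a * (h + u * d) ^+ 2 + b * (h - v * d) ^+ 2 =
  (a + b) * h ^+ 2 + (a * u ^+ 2 + b * v ^+ 2) * d ^+ 2.
Proof.
move=> auv; have -> : a * (h + u * d) ^+ 2 + b * (h - v * d) ^+ 2 =
  (a + b) * h ^+ 2 + (a * u - b * v) * (2 * h * d) + (a * u ^+ 2 + b * v ^+ 2) * d ^+ 2.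
  by ring.
by rewrite auv subrr mul0r addr0.
Qed.

Lemma fit1 (R : realType) (V : finType) (S : {set V}) : fit (1 : R) S = fun=> 1.
Proof. by apply: funext => u; rewrite /fit if_same. Qed.

Section StarNeutralFixation.
Variables (R : realType) (n : nat) (c : 'I_n.+2) (delta : R).
Hypothesis delta_ge0 : 0 <= delta.
Hypothesis delta_le1 : delta <= 1.

Definition leaf_weight : R := 1 + (1 - delta) * n%:R.
Definition centre_weight : R := 1 + delta * n%:R.
Definition weight_total : R := centre_weight + n.+1%:R * leaf_weight.

Lemma weight_totalE : weight_total = (1 - delta) * n%:R ^+ 2 + 2 * n.+1%:R.
Proof. by rewrite /weight_total /centre_weight /leaf_weight -addn1 natrD; ring. Qed.

Lemma leaf_weight_gt0 : 0 < leaf_weight.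
Proof. by rewrite ltr_wpDr ?ltr01 // mulr_ge0 ?subr_ge0 ?ler0n. Qed.

Lemma centre_weight_gt0 : 0 < centre_weight.
Proof. by rewrite ltr_wpDr ?ltr01 // mulr_ge0 ?ler0n. Qed.

Lemma weight_total_gt0 : 0 < weight_total.
Proof. by rewrite addr_gt0 ?centre_weight_gt0 // mulr_gt0 ?ltr0Sn ?leaf_weight_gt0. Qed.

Definition leaf_to_centre : R := leaf_weight / (n.+2%:R * n.+1%:R).
Definition centre_to_leaf : R := centre_weight / (n.+2%:R * n.+1%:R).

Lemma star_transE (S : {set 'I_n.+2}) (f : {set 'I_n.+2} -> R) :
  \sum_S' trans (star c) delta 1 S S' * f S' =
  \sum_(l | l != c) (leaf_to_centre * f (upd S c (l \in S)) +
                     centre_to_leaf * f (upd S l (c \in S))).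
Proof.
rewrite /trans; under eq_bigr do rewrite mulrDl -!mulrA.
rewrite big_split -!mulr_sumr /= dB_transE Bd_transE !fit1 -!mulr_sumr.
rewrite !sum_star_edges !mulr_sumr -big_split /=; apply: eq_bigr => l lc.
rewrite !sum_star_nbr !card_star_nbr eqxx (negbTE lc) sum_leaves_const sumr_const.
rewrite card_ord /leaf_to_centre /centre_to_leaf /leaf_weight /centre_weight.
by field; rewrite nat1r -natrD !pnatr_eq0.
Qed.

Lemma rates_total : n.+1%:R * (leaf_to_centre + centre_to_leaf) = 1.
Proof.
rewrite /leaf_to_centre /centre_to_leaf /leaf_weight /centre_weight.
by field; rewrite nat1r -natrD !pnatr_eq0.
Qed.

Definition fix_weight (x : 'I_n.+2) : R :=
  (if x == c then centre_weight else leaf_weight) / weight_total.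

Definition fix_prob (S : {set 'I_n.+2}) : R := \sum_(x in S) fix_weight x.

Lemma rates_balance (l : 'I_n.+2) :
  l != c -> leaf_to_centre * fix_weight c = centre_to_leaf * fix_weight l.
Proof.
move=> lc; rewrite /fix_weight eqxx (negbTE lc) /leaf_to_centre /centre_to_leaf.
by ring.
Qed.

Lemma fix_weight_ge0 (x : 'I_n.+2) : 0 <= fix_weight x.
Proof.
rewrite /fix_weight divr_ge0 ?(ltW weight_total_gt0) //.
by case: ifP => _; apply: ltW; [exact: centre_weight_gt0|exact: leaf_weight_gt0].
Qed.

Lemma sum_fix_weight : \sum_x fix_weight x = 1.
Proof.
rewrite (bigD1 c) //= /fix_weight eqxx.
under eq_bigr => x xc do rewrite (negbTE xc).
rewrite sum_leaves_const -mulr_natl mulrA -mulrDl divff //.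
by rewrite gt_eqF ?weight_total_gt0.
Qed.

Lemma fix_prob_ge0 (S : {set 'I_n.+2}) : 0 <= fix_prob S.
Proof. by rewrite sumr_ge0 // => x _; rewrite fix_weight_ge0. Qed.

Lemma fix_prob_le1 (S : {set 'I_n.+2}) : fix_prob S <= 1.
Proof.
rewrite -[leRHS]sum_fix_weight /fix_prob big_mkcond ler_sum // => x _.
by case: ifP; rewrite ?fix_weight_ge0.
Qed.

Lemma fix_prob_set1 (x : 'I_n.+2) : fix_prob [set x] = fix_weight x.
Proof. exact: big_set1. Qed.

Lemma fix_prob_upd (S : {set 'I_n.+2}) (v : 'I_n.+2) (b : bool) :
  fix_prob (upd S v b) = fix_prob S + fix_weight v * (b%:R - (v \in S)%:R).
Proof. exact: sum_upd. Qed.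

Lemma fix_prob_harmonic (S : {set 'I_n.+2}) :
  kernel_apply (trans (star c) delta 1) fix_prob S = fix_prob S.
Proof.
rewrite /kernel_apply star_transE.
rewrite (eq_bigr (fun=> (leaf_to_centre + centre_to_leaf) * fix_prob S)) => [|l lc].
  by rewrite sum_leaves_const -mulr_natl mulrA rates_total mul1r.
rewrite !fix_prob_upd -[(c \in S)%:R - _]opprB mulrN.
exact/balanced_step_mean/rates_balance.
Qed.

Definition fix_drift : R := leaf_to_centre * (centre_weight / weight_total) ^+ 2 +
                            centre_to_leaf * (leaf_weight / weight_total) ^+ 2.

Lemma fix_drift_gt0 : 0 < fix_drift.
Proof.
have NM_gt0 : 0 < n.+2%:R * n.+1%:R :> R by rewrite mulr_gt0 ?ltr0Sn.
by rewrite /fix_drift /leaf_to_centre /centre_to_leaf addr_gt0 // mulr_gt0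
  ?exprn_gt0 ?divr_gt0 ?leaf_weight_gt0 ?centre_weight_gt0 ?weight_total_gt0.
Qed.

Lemma fix_prob_sq_step (S : {set 'I_n.+2}) :
  kernel_apply (trans (star c) delta 1) (fun S => fix_prob S ^+ 2) S =
  fix_prob S ^+ 2 + \sum_(l | l != c) fix_drift * ((l \in S)%:R - (c \in S)%:R) ^+ 2.
Proof.
rewrite /kernel_apply star_transE.
have -> : fix_prob S ^+ 2 =
    \sum_(l | l != c) (leaf_to_centre + centre_to_leaf) * fix_prob S ^+ 2.
  by rewrite sum_leaves_const -mulr_natl mulrA rates_total mul1r.
rewrite -big_split; apply: eq_bigr => l lc /=.
rewrite !fix_prob_upd -[(c \in S)%:R - _]opprB mulrN balanced_step_sq; last first.
  exact: rates_balance.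
by rewrite /fix_drift /fix_weight eqxx (negbTE lc).
Qed.

Lemma fix_prob_sq_drift (S : {set 'I_n.+2}) :
  fix_prob S ^+ 2 + fix_drift * transient finset.set0 [set: 'I_n.+2] S <=
  kernel_apply (trans (star c) delta 1) (fun S => fix_prob S ^+ 2) S.
Proof.
have drift_ge0 l : 0 <= fix_drift * ((l \in S)%:R - (c \in S)%:R) ^+ 2.
  by rewrite mulr_ge0 ?sqr_ge0 ?ltW ?fix_drift_gt0.
rewrite fix_prob_sq_step lerD2l /transient.
have [/andP[/set0Pn[a aS]]|_] := boolP (_ && _); last by rewrite mulr0 sumr_ge0.
rewrite -properT => /properP[_ [b _ bS]].
have [l lc lS] := exists_discordant_leaf c aS bS.
rewrite mulr1 (bigD1 l) //= -[leLHS]addr0 lerD ?sumr_ge0 //.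
move: lS; case: (l \in S); case: (c \in S) => //= _.
  by rewrite subr0 expr1n mulr1.
by rewrite sub0r sqrrN expr1n mulr1.
Qed.

Theorem star_fixation (S0 : {set 'I_n.+2}) :
  fp_is (star c) delta 1 S0 (fix_prob S0).
Proof.
apply: (harmonic_absorption (P := trans (star c) delta 1) (x0 := S0)
  (p := fun t => tprob (star c) delta 1 t S0) (h := fix_prob)
  (lo := finset.set0) (hi := [set: 'I_n.+2]) (gamma := fix_drift)) => //.
- by move=> S S'; rewrite trans_ge0 ?delta_ge0 ?delta_le1 ?ler01.
- exact: fix_prob_harmonic.
- exact: fix_prob_ge0.
- exact: fix_prob_le1.
- exact: big_set0.
- by rewrite -sum_fix_weight; apply: eq_bigl => x; rewrite inE.
- exact: fix_drift_gt0.
- exact: fix_prob_sq_drift.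
Qed.

End StarNeutralFixation.

Theorem mainTheorem6 (R : realType) (N : nat) (hN : (2 <= N)%N) (c : 'I_N)
    (delta : R) (hdelta : 0 <= delta <= 1) :
  (forall i : 'I_N, i != c ->
     fp_is (star c) delta 1 [set i]
       ((1 + (1 - delta) * (N - 2)%:R) /
        ((1 - delta) * ((N - 2)%:R) ^+ 2 + 2 * (N - 1)%:R)))
  /\
  fp_is (star c) delta 1 [set c]
    ((1 + delta * (N - 2)%:R) /
     ((1 - delta) * ((N - 2)%:R) ^+ 2 + 2 * (N - 1)%:R)).
Proof.
move: hN c; case: N => [|[|n]] // _ c.
case/andP: hdelta => delta_ge0 delta_le1.
have fix_set1 x := star_fixation (c := c) delta_ge0 delta_le1 (S0 := [set x]).
rewrite !subSS !subn0 -weight_totalE; split => [i ic|].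
  by move: (fix_set1 i); rewrite fix_prob_set1 /fix_weight (negbTE ic).
by move: (fix_set1 c); rewrite fix_prob_set1 /fix_weight eqxx.
Qed.
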